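(* Let $P$ be the transition matrix of a reversible and ergodic Markov chain on $V$ with stationary distribution $\pi$ and mixing rate $t^*$. For the quasi-random router model for $P$ with any initial configuration of $M$ tokens, $$\left|\chi^{(T)}_w-\mu^{(T)}_w\right|\le\frac{6\pi_w}{\pi_{\min}}\,\lg(M+1)\,t^*\,\Delta$$ for all $w\in V$ and $T\ge0$.
   Context: Let $V=\{1,\dots,N\}$ and let $P\in\mathbb{R}_{\ge 0}^{N\times N}$ be an ergodic (irreducible, aperiodic) stochastic matrix with stationary distribution $\pi$; $\pi_{\min}=\min_v\pi_v$; reversible means $\pi_uP_{u,v}=\pi_vP_{v,u}$ for all $u,v$. For $v\in V$ let $\mathcal N(v)=\{u: P_{v,u}>0\}$, $\delta(v)=|\mathcal N(v)|$, $\Delta=\max_v\delta(v)$; $\lg=\log_2$. Total variation distance $d_{TV}(\xi,\zeta)=\frac12\|\xi-\zeta\|_1$; mixing time $\tau(\varepsilon)=\max_{v}\min\{t\ge0: d_{TV}(P^t_{v,\cdot},\pi)\le\varepsilon\}$; mixing rate $t^*=\tau(1/4)$. The van der Corput function $\psi$: $\psi(0)=0$ and for $i=\sum_j\beta_j(i)2^j>0$ in binary, $\psi(i)=\sum_j\beta_j(i)2^{-(j+1)}$. The quasi-random router: fix an ordering $u_1,\dots,u_{\delta(v)}$ of $\mathcal N(v)$ and set $\sigma_v(i)=u_k$ where $\sum_{j=1}^{k-1}P_{v,u_j}\le\psi(i)<\sum_{j=1}^{k}P_{v,u_j}$. Write $I_{v,u}[z,z')=|\{j\in\{z,\dots,z'-1\}:\sigma_v(j)=u\}|$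 (zero if $z'\le z$). Given $\chi^{(0)}\in\mathbb{Z}_{\ge0}^N$ with $\sum_v\chi^{(0)}_v=M$, set $Z^{(t)}_{v,u}=I_{v,u}\big[\sum_{s=0}^{t-1}\chi^{(s)}_v,\sum_{s=0}^{t}\chi^{(s)}_v\big)$, $\chi^{(t+1)}_u=\sum_vZ^{(t)}_{v,u}$, $\mu^{(0)}=\chi^{(0)}$, $\mu^{(t)}=\mu^{(0)}P^t$. *)

(* Vertices V = {1..N} are
   represented as 0..N-1. *)
From Stdlib Require Import Reals Arith List.
Open Scope R_scope.

Definition Rsum (N : nat) (f : nat -> R) : R :=
  fold_right Rplus 0 (map f (seq 0 N)).
Definition nsum (N : nat) (f : nat -> nat) : nat :=
  fold_right Nat.add 0%nat (map f (seq 0 N)).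

Fixpoint Ppow (N : nat) (P : nat -> nat -> R) (t : nat) : nat -> nat -> R :=
  match t with
  | O => fun u v => if Nat.eq_dec u v then 1 else 0
  | S t' => fun u v => Rsum N (fun k => Ppow N P t' u k * P k v)
  end.

Definition stochastic (N : nat) (P : nat -> nat -> R) : Prop :=
  (forall u v, (u < N)%nat -> (v < N)%nat -> 0 <= P u v) /\
  (forall u, (u < N)%nat -> Rsum N (fun v => P u v) = 1).

Definition irreducible (N : nat) (P : nat -> nat -> R) : Prop :=
  forall u v, (u < N)%nat -> (v < N)%nat -> exists t, 0 < Ppow N P t u v.

(* period of every state is 1: gcd { t >= 1 : P^t_{v,v} > 0 } = 1 *)
Definition aperiodic (N : nat) (P : nat -> nat -> R) : Prop :=
  forall v, (v < N)%nat ->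
    forall d : nat,
      (forall t, (1 <= t)%nat -> 0 < Ppow N P t v v -> Nat.divide d t) ->
      d = 1%nat.

Definition ergodic (N : nat) (P : nat -> nat -> R) : Prop :=
  stochastic N P /\ irreducible N P /\ aperiodic N P.

Definition stationary (N : nat) (P : nat -> nat -> R) (pi : nat -> R) : Prop :=
  (forall v, (v < N)%nat -> 0 <= pi v) /\
  Rsum N pi = 1 /\
  (forall v, (v < N)%nat -> Rsum N (fun u => pi u * P u v) = pi v).

Definition reversible (N : nat) (P : nat -> nat -> R) (pi : nat -> R) : Prop :=
  forall u v, (u < N)%nat -> (v < N)%nat -> pi u * P u v = pi v * P v u.

Definition pi_min (N : nat) (pi : nat -> R) : R :=
  fold_right Rmin (pi 0%nat) (map pi (seq 0 N)).

Definition dTV_t (N : nat) (P : nat -> nat -> R) (pi : nat -> R) (v t : nat) : R :=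
  / 2 * Rsum N (fun u => Rabs (Ppow N P t v u - pi u)).

Definition is_least (Q : nat -> Prop) (t : nat) : Prop :=
  Q t /\ forall s, Q s -> (t <= s)%nat.

(* tau(eps) = max_v min { t >= 0 : d_TV(P^t_{v,.}, pi) <= eps } *)
Definition is_mixing_time (N : nat) (P : nat -> nat -> R) (pi : nat -> R)
  (eps : R) (tau : nat) : Prop :=
  (forall v, (v < N)%nat ->
     exists tv, is_least (fun t => dTV_t N P pi v t <= eps) tv /\ (tv <= tau)%nat) /\
  (exists v, (v < N)%nat /\ is_least (fun t => dTV_t N P pi v t <= eps) tau).

Definition is_mixing_rate (N : nat) (P : nat -> nat -> R) (pi : nat -> R)
  (tstar : nat) : Prop := is_mixing_time N P pi (/ 4) tstar.

Definition degree (N : nat) (P : nat -> nat -> R) (v : nat) : nat :=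
  length (filter (fun u => if Rlt_dec 0 (P v u) then true else false) (seq 0 N)).
Definition max_degree (N : nat) (P : nat -> nat -> R) : nat :=
  fold_right Nat.max 0%nat (map (degree N P) (seq 0 N)).

Definition lg (x : R) : R := ln x / ln 2.

(* van der Corput function: psi(i) = sum_j beta_j(i) 2^{-(j+1)}
   (all bits of i beyond position i are zero since i < 2^i) *)
Definition psi (i : nat) : R :=
  Rsum i (fun j => if Nat.testbit i j then (/ 2) ^ (S j) else 0).

Definition is_nbr_ordering (N : nat) (P : nat -> nat -> R) (ord : nat -> list nat) : Prop :=
  forall v, (v < N)%nat ->
    NoDup (ord v) /\ (forall u, In u (ord v) <-> ((u < N)%nat /\ 0 < P v u)).

(* returns the first u_k with x < acc + sum_{j<=k} P_{v,u_j};
   this is the u_k with sum_{j<k} <= x < sum_{j<=k} (for x >= acc) *)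
Fixpoint route_aux (P : nat -> nat -> R) (v : nat) (l : list nat) (acc x : R) : nat :=
  match l with
  | nil => 0%nat
  | u :: l' => if Rlt_dec x (acc + P v u) then u else route_aux P v l' (acc + P v u) x
  end.

Definition sigma (P : nat -> nat -> R) (ord : nat -> list nat) (v i : nat) : nat :=
  route_aux P v (ord v) 0 (psi i).

Definition Icount (P : nat -> nat -> R) (ord : nat -> list nat) (v u z z' : nat) : nat :=
  length (filter (fun j => Nat.eqb (sigma P ord v j) u) (seq z (z' - z))).

(* (chi^(t), fun v => sum_{s<t} chi^(s)_v) *)
Fixpoint qr_state (N : nat) (P : nat -> nat -> R) (ord : nat -> list nat)
  (chi0 : nat -> nat) (t : nat) : (nat -> nat) * (nat -> nat) :=
  match t with
  | O => (chi0, fun _ => 0%nat)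
  | S t' =>
      let (c, s) := qr_state N P ord chi0 t' in
      (fun u => nsum N (fun v => Icount P ord v u (s v) (s v + c v)),
       fun v => (s v + c v)%nat)
  end.

Definition chi (N : nat) (P : nat -> nat -> R) (ord : nat -> list nat)
  (chi0 : nat -> nat) (t : nat) : nat -> nat := fst (qr_state N P ord chi0 t).

Definition mu (N : nat) (P : nat -> nat -> R) (chi0 : nat -> nat) (t w : nat) : R :=
  Rsum N (fun v => INR (chi0 v) * Ppow N P t v w).

(* Let x^(t) be the token counts and e^(t) := x^(t+1) - x^(t) P the rounding
   error of round t.  Telescoping gives
       x^(T) - mu^(T) = sum_{t<T} e^(t) P^(T-1-t).                      (1)
   - Van der Corput: among n consecutive integers j, the number with
     psi(j) < x is n x up to lg(n+1) (split n into a dyadic block, on which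
     the count is exact up to 1 by self-similarity of psi, and a remainder
     of less than half the size).  The router sends token j from v to u iff
     psi(j) lies in an interval of length P_{v,u}, so |e^(t)_u| is at most
     2 lg(M+1) Delta, and e^(t) has mean zero.
   - Reversibility: P^s_{u,w} = (pi_w/pi_u) P^s_{w,u}.  Hence a mean-zero
     error vector bounded by E contributes at most E (pi_w/pi_min) to (1),
     and even E (pi_w/pi_min) ||P^s_{w,.} - pi||_1.
   - Mixing: by an L1 contraction argument rows of P^s are within total
     variation (1/2)^(s div tstar), so the second bound summed over
     s >= tstar is at most 2 tstar, and the first over s < tstar is tstar. *)
From Pilot Require Import Defs.
From Stdlib Require Import Reals Arith List Lia Lra Permutation.
Open Scope R_scope.

Lemma fold_Rplus_app (l1 l2 : list R) :
  fold_right Rplus 0 (l1 ++ l2) = fold_right Rplus 0 l1 + fold_right Rplus 0 l2.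
Proof. induction l1; simpl; [ring | rewrite IHl1; ring]. Qed.

Lemma Rsum_O (f : nat -> R) : Rsum 0 f = 0.
Proof. reflexivity. Qed.

Lemma Rsum_S (N : nat) (f : nat -> R) : Rsum (S N) f = Rsum N f + f N.
Proof. unfold Rsum. rewrite seq_S, map_app, fold_Rplus_app. simpl. ring. Qed.

Lemma Rsum_ext (N : nat) (f g : nat -> R) :
  (forall i, (i < N)%nat -> f i = g i) -> Rsum N f = Rsum N g.
Proof. induction N; intros H; [reflexivity|]. rewrite !Rsum_S, IHN, H; auto. Qed.

Lemma Rsum_plus (N : nat) (f g : nat -> R) :
  Rsum N (fun i => f i + g i) = Rsum N f + Rsum N g.
Proof. induction N; [unfold Rsum; simpl; ring|]. rewrite !Rsum_S, IHN; ring. Qed.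

Lemma Rsum_minus (N : nat) (f g : nat -> R) :
  Rsum N (fun i => f i - g i) = Rsum N f - Rsum N g.
Proof. induction N; [unfold Rsum; simpl; ring|]. rewrite !Rsum_S, IHN; ring. Qed.

Lemma Rsum_scal_l (N : nat) (c : R) (f : nat -> R) :
  Rsum N (fun i => c * f i) = c * Rsum N f.
Proof. induction N; [unfold Rsum; simpl; ring|]. rewrite !Rsum_S, IHN; ring. Qed.

Lemma Rsum_scal_r (N : nat) (c : R) (f : nat -> R) :
  Rsum N (fun i => f i * c) = Rsum N f * c.
Proof. induction N; [unfold Rsum; simpl; ring|]. rewrite !Rsum_S, IHN; ring. Qed.

Lemma Rsum_const (N : nat) (c : R) : Rsum N (fun _ => c) = INR N * c.
Proof. induction N; [unfold Rsum; simpl; ring|]. rewrite Rsum_S, IHN, S_INR; ring. Qed.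

Lemma Rsum_le (N : nat) (f g : nat -> R) :
  (forall i, (i < N)%nat -> f i <= g i) -> Rsum N f <= Rsum N g.
Proof.
  induction N; intros H; [unfold Rsum; simpl; lra|]. rewrite !Rsum_S.
  assert (f N <= g N) by auto. assert (Rsum N f <= Rsum N g) by auto. lra.
Qed.

Lemma Rsum_nonneg (N : nat) (f : nat -> R) :
  (forall i, (i < N)%nat -> 0 <= f i) -> 0 <= Rsum N f.
Proof.
  intros H. rewrite <- (Rmult_0_r (INR N)), <- Rsum_const. apply Rsum_le; auto.
Qed.

Lemma Rsum_term_le (N : nat) (f : nat -> R) (i : nat) :
  (forall j, (j < N)%nat -> 0 <= f j) -> (i < N)%nat -> f i <= Rsum N f.
Proof.
  induction N; intros H Hi; [lia|]. rewrite Rsum_S.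
  assert (0 <= f N) by auto. assert (0 <= Rsum N f) by (apply Rsum_nonneg; auto).
  destruct (Nat.eq_dec i N); [subst; lra|].
  assert (f i <= Rsum N f) by (apply IHN; auto; lia). lra.
Qed.

Lemma Rsum_pos_witness (N : nat) (f : nat -> R) :
  (forall i, (i < N)%nat -> 0 <= f i) -> 0 < Rsum N f -> exists u, (u < N)%nat /\ 0 < f u.
Proof.
  induction N; intros Hp H; [rewrite Rsum_O in H; lra|]. rewrite Rsum_S in H.
  destruct (Rlt_dec 0 (f N)); [exists N; split; auto; lia|].
  assert (0 <= f N) by (apply Hp; lia).
  destruct IHN as [u [Hu Hpu]]; auto; [lra|]. exists u; split; auto; lia.
Qed.

Lemma Rsum_abs (N : nat) (f : nat -> R) : Rabs (Rsum N f) <= Rsum N (fun i => Rabs (f i)).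
Proof.
  induction N; [unfold Rsum; simpl; rewrite Rabs_R0; lra|]. rewrite !Rsum_S.
  eapply Rle_trans; [apply Rabs_triang|]. lra.
Qed.

Lemma Rsum_abs_weighted (N : nat) (a Q : nat -> R) :
  (forall k, (k < N)%nat -> 0 <= Q k) ->
  Rabs (Rsum N (fun k => a k * Q k)) <= Rsum N (fun k => Rabs (a k) * Q k).
Proof.
  intros H. eapply Rle_trans; [apply Rsum_abs|]. apply Rsum_le; intros k Hk.
  rewrite Rabs_mult, (Rabs_pos_eq (Q k)); auto; lra.
Qed.

Lemma Rsum_swap (N M : nat) (f : nat -> nat -> R) :
  Rsum N (fun i => Rsum M (fun j => f i j)) = Rsum M (fun j => Rsum N (fun i => f i j)).
Proof.
  induction N.
  - rewrite Rsum_O, <- (Rmult_0_r (INR M)), <- Rsum_const. reflexivity.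
  - rewrite Rsum_S, IHN, <- Rsum_plus. apply Rsum_ext; intros; rewrite Rsum_S; reflexivity.
Qed.

Lemma Rsum_delta_l (N : nat) (f : nat -> R) (w : nat) :
  (w < N)%nat -> Rsum N (fun i => f i * (if Nat.eq_dec i w then 1 else 0)) = f w.
Proof.
  induction N; intros H; [lia|]. rewrite Rsum_S. destruct (Nat.eq_dec N w).
  - subst. rewrite (Rsum_ext _ _ (fun _ => 0)); [rewrite Rsum_const; ring|].
    intros i Hi; destruct (Nat.eq_dec i w); [lia|ring].
  - rewrite IHN; [ring|lia].
Qed.

Lemma Rsum_delta_r (N : nat) (f : nat -> R) (w : nat) :
  (w < N)%nat -> Rsum N (fun i => (if Nat.eq_dec w i then 1 else 0) * f i) = f w.
Proof.
  intros H. rewrite <- (Rsum_delta_l N f w H). apply Rsum_ext; intros i _.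
  destruct (Nat.eq_dec w i), (Nat.eq_dec i w); subst; try ring; congruence.
Qed.

Lemma Rsum_S_left (N : nat) (f : nat -> R) :
  Rsum (S N) f = f 0%nat + Rsum N (fun i => f (S i)).
Proof. induction N; [unfold Rsum; simpl; ring|]. rewrite Rsum_S, IHN, (Rsum_S N). ring. Qed.

Lemma Rsum_split (a b : nat) (f : nat -> R) :
  Rsum (a + b) f = Rsum a f + Rsum b (fun i => f (a + i)%nat).
Proof. induction b; [rewrite Nat.add_0_r, Rsum_O; ring|]. rewrite Nat.add_succ_r, !Rsum_S, IHb. ring. Qed.

Lemma Rsum_rev (T : nat) (f : nat -> R) : Rsum T (fun t => f (T - S t)%nat) = Rsum T f.
Proof.
  induction T; [reflexivity|]. rewrite Rsum_S_left, Rsum_S.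
  replace (S T - 1)%nat with T by lia. rewrite <- IHT. simpl. ring.
Qed.

Lemma Rsum_indicator_lt (T t : nat) :
  Rsum T (fun s => if lt_dec s t then 1 else 0) = INR (Nat.min T t).
Proof.
  induction T; [reflexivity|]. rewrite Rsum_S, IHT. destruct (lt_dec T t).
  - rewrite !Nat.min_l by lia. rewrite S_INR; ring.
  - rewrite !Nat.min_r by lia. ring.
Qed.

Lemma nsum_S (N : nat) (f : nat -> nat) : nsum (S N) f = (nsum N f + f N)%nat.
Proof.
  unfold nsum. rewrite seq_S, map_app.
  assert (Happ : forall l1 l2, fold_right Nat.add 0%nat (l1 ++ l2) =
                   (fold_right Nat.add 0%nat l1 + fold_right Nat.add 0%nat l2)%nat).
  { induction l1; simpl; intros; [lia | rewrite IHl1; lia]. }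
  rewrite Happ. simpl. lia.
Qed.

Lemma INR_nsum (N : nat) (f : nat -> nat) : INR (nsum N f) = Rsum N (fun i => INR (f i)).
Proof. induction N; [reflexivity|]. rewrite nsum_S, Rsum_S, plus_INR, IHN; reflexivity. Qed.

Lemma ln2_pos : 0 < ln 2.
Proof. rewrite <- ln_1. apply ln_increasing; lra. Qed.

Lemma lg_le (a b : R) : 0 < a -> a <= b -> lg a <= lg b.
Proof.
  intros Ha [Hab | <-]; [|lra]. unfold lg. apply Rmult_le_compat_r.
  - left; apply Rinv_0_lt_compat, ln2_pos.
  - left; apply ln_increasing; auto.
Qed.

Lemma lg_double (a : R) : 0 < a -> lg (2 * a) = 1 + lg a.
Proof. intros Ha. unfold lg. rewrite ln_mult by lra. field. apply Rgt_not_eq, ln2_pos. Qed.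

Lemma lg_1 : lg 1 = 0.
Proof. unfold lg; rewrite ln_1; unfold Rdiv; ring. Qed.

Lemma lg_nonneg (a : R) : 1 <= a -> 0 <= lg a.
Proof. intros; rewrite <- lg_1; apply lg_le; lra. Qed.

Definition bit_weight (j i : nat) : R := if Nat.testbit j i then (/ 2) ^ (S i) else 0.
Definition psi_trunc (m j : nat) : R := Rsum m (bit_weight j).

Lemma psi_trunc_S (m j : nat) :
  psi_trunc (S m) j = bit_weight j 0 + / 2 * psi_trunc m (j / 2).
Proof.
  unfold psi_trunc. rewrite Rsum_S_left. f_equal. rewrite <- Rsum_scal_l.
  apply Rsum_ext; intros i _. unfold bit_weight. rewrite Nat.div2_bits.
  destruct (Nat.testbit j (S i)); simpl; ring.
Qed.

Lemma psi_trunc_stable (m d j : nat) : (j < 2 ^ m)%nat -> psi_trunc (m + d) j = psi_trunc m j.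
Proof.
  intros H. induction d; [rewrite Nat.add_0_r; auto|].
  unfold psi_trunc in *. rewrite Nat.add_succ_r, Rsum_S, IHd.
  unfold bit_weight. rewrite Nat.testbit_eqb, Nat.div_small; [simpl; ring|].
  apply Nat.lt_le_trans with (2 ^ m)%nat; auto. apply Nat.pow_le_mono_r; lia.
Qed.

Lemma psi_as_trunc (m j : nat) : (j <= m)%nat -> psi j = psi_trunc m j.
Proof.
  intros H. change (psi j) with (psi_trunc j j). replace m with (j + (m - j))%nat by lia.
  rewrite psi_trunc_stable; auto. apply Nat.pow_gt_lin_r; lia.
Qed.

Lemma psi_even (a : nat) : psi (2 * a) = / 2 * psi a.
Proof.
  rewrite (psi_as_trunc (S (2 * a))), psi_trunc_S by lia.
  unfold bit_weight at 1. rewrite Nat.testbit_even_0, <- Nat.div2_div, Nat.div2_double.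
  rewrite (psi_as_trunc (2 * a) a) by lia. ring.
Qed.

Lemma psi_odd (a : nat) : psi (2 * a + 1) = / 2 + / 2 * psi a.
Proof.
  rewrite (psi_as_trunc (S (2 * a + 1))), psi_trunc_S by lia.
  unfold bit_weight at 1. rewrite Nat.testbit_odd_0, <- Nat.div2_div.
  replace (2 * a + 1)%nat with (S (2 * a)) by lia. rewrite Nat.div2_succ_double.
  rewrite (psi_as_trunc (S (2 * a)) a) by lia. simpl; ring.
Qed.

Lemma psi_trunc_bounds (m j : nat) : 0 <= psi_trunc m j <= 1 - (/ 2) ^ m.
Proof.
  revert j; induction m; intros j; [unfold psi_trunc; rewrite Rsum_O, pow_O; lra|].
  rewrite psi_trunc_S. destruct (IHm (j / 2)%nat).
  assert (0 < (/ 2) ^ m) by (apply pow_lt; lra).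
  unfold bit_weight. simpl pow. destruct (Nat.testbit j 0); lra.
Qed.

Lemma psi_bounds (j : nat) : 0 <= psi j < 1.
Proof.
  change (psi j) with (psi_trunc j j). destruct (psi_trunc_bounds j j).
  assert (0 < (/ 2) ^ j) by (apply pow_lt; lra). lra.
Qed.

Definition Rltb (a b : R) : bool := if Rlt_dec a b then true else false.
Definition count_below (x : R) (z n : nat) : nat :=
  length (filter (fun j => Rltb (psi j) x) (seq z n)).

Lemma count_below_app (x : R) (z a b : nat) :
  count_below x z (a + b) = (count_below x z a + count_below x (z + a) b)%nat.
Proof. unfold count_below. rewrite seq_app, filter_app, length_app. reflexivity. Qed.

Lemma count_below_S (x : R) (z m : nat) :
  count_below x z (S m) = (count_below x z m + if Rltb (psi (z + m)) x then 1 else 0)%nat.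
Proof.
  replace (S m) with (m + 1)%nat by lia. rewrite count_below_app.
  unfold count_below at 2. simpl. destruct (Rltb _ _); simpl; lia.
Qed.

Lemma count_below_all (x : R) (z n : nat) : 1 <= x -> count_below x z n = n.
Proof.
  intros H. induction n; [reflexivity|]. rewrite count_below_S, IHn. unfold Rltb.
  destruct (psi_bounds (z + n)). destruct (Rlt_dec (psi (z + n)) x); [lia | lra].
Qed.

Lemma count_below_none (x : R) (z n : nat) : x <= 0 -> count_below x z n = 0%nat.
Proof.
  intros H. induction n; [reflexivity|]. rewrite count_below_S, IHn. unfold Rltb.
  destruct (psi_bounds (z + n)). destruct (Rlt_dec (psi (z + n)) x); [lra | lia].
Qed.

(* The self-similarity of [psi]: on [2m] consecutive integers, the even ones
   realise the count for threshold [2x] and the odd ones for [2x - 1], each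
   on [m] consecutive integers. *)
Lemma count_below_halves (x : R) (z m : nat) : exists a a',
  count_below x z (2 * m) = (count_below (2 * x) a m + count_below (2 * x - 1) a' m)%nat.
Proof.
  assert (Heven : forall y, Rltb (/ 2 * y) x = Rltb y (2 * x)).
  { intros y. unfold Rltb. destruct (Rlt_dec (/ 2 * y) x), (Rlt_dec y (2 * x)); auto; lra. }
  assert (Hodd : forall y, Rltb (/ 2 + / 2 * y) x = Rltb y (2 * x - 1)).
  { intros y. unfold Rltb. destruct (Rlt_dec (/ 2 + / 2 * y) x), (Rlt_dec y (2 * x - 1)); auto; lra. }
  destruct (Nat.Even_or_Odd z) as [[a Ha] | [a Ha]]; subst z.
  - exists a, a. induction m; [reflexivity|].
    replace (2 * S m)%nat with (S (S (2 * m))) by lia. rewrite !count_below_S, IHm.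
    replace (2 * a + S (2 * m))%nat with (2 * (a + m) + 1)%nat by lia.
    replace (2 * a + 2 * m)%nat with (2 * (a + m))%nat by lia.
    rewrite psi_even, psi_odd, Heven, Hodd. lia.
  - exists (S a), a. induction m; [reflexivity|].
    replace (2 * S m)%nat with (S (S (2 * m))) by lia. rewrite !count_below_S, IHm.
    replace (2 * a + 1 + S (2 * m))%nat with (2 * (S a + m))%nat by lia.
    replace (2 * a + 1 + 2 * m)%nat with (2 * (a + m) + 1)%nat by lia.
    rewrite psi_even, psi_odd, Heven, Hodd. lia.
Qed.

(* On a block of [2^k] consecutive integers the count is off by at most one:
   by [count_below_halves] one of the two half-counts is trivial. *)
Lemma count_below_dyadic (k : nat) : forall (z : nat) (x : R), 0 <= x <= 1 ->
  Rabs (INR (count_below x z (2 ^ k)) - 2 ^ k * x) <= 1.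
Proof.
  induction k; intros z x Hx.
  - simpl. rewrite count_below_S. unfold count_below, Rltb; simpl.
    destruct (Rlt_dec _ _); simpl; apply Rabs_le; lra.
  - rewrite Nat.pow_succ_r'. destruct (count_below_halves x z (2 ^ k)) as [a [a' ->]].
    rewrite plus_INR, <- tech_pow_Rmult. destruct (Rle_lt_dec x (/ 2)).
    + rewrite (count_below_none (2 * x - 1)) by lra.
      set (c := INR (count_below (2 * x) a (2 ^ k))).
      replace (c + INR 0 - 2 * 2 ^ k * x) with (c - 2 ^ k * (2 * x)) by (simpl; ring).
      apply IHk; lra.
    + rewrite (count_below_all (2 * x)), pow_INR by lra.
      replace (INR 2) with 2 by (simpl; ring).
      set (c := INR (count_below (2 * x - 1) a' (2 ^ k))).
      replace (2 ^ k + c - 2 * 2 ^ k * x) with (c - 2 ^ k * (2 * x - 1)) by ring.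
      apply IHk; lra.
Qed.

Lemma dyadic_split (n : nat) : (0 < n)%nat ->
  exists k r, n = (2 ^ k + r)%nat /\ (2 * (r + 1) <= n + 1)%nat.
Proof.
  intros Hn. destruct (Nat.log2_spec n Hn) as [H1 H2].
  exists (Nat.log2 n), (n - 2 ^ Nat.log2 n)%nat. rewrite Nat.pow_succ_r' in H2. lia.
Qed.

(* Van der Corput discrepancy: splitting off the largest dyadic block and
   recursing on the remainder costs 1 per halving. *)
Theorem count_below_discrepancy (n z : nat) (x : R) : 0 <= x <= 1 ->
  Rabs (INR (count_below x z n) - INR n * x) <= lg (INR n + 1).
Proof.
  revert z. induction n as [n IH] using lt_wf_ind. intros z Hx.
  destruct (Nat.eq_dec n 0) as [-> | Hn].
  - unfold count_below; simpl. rewrite Rplus_0_l, lg_1, Rmult_0_l, Rminus_0_r, Rabs_R0; lra.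
  - destruct (dyadic_split n ltac:(lia)) as [k [r [-> Hr]]].
    pose proof (IH r ltac:(lia) (z + 2 ^ k)%nat Hx) as Hrest.
    pose proof (count_below_dyadic k z x Hx) as Hblock.
    assert (Hlen : 2 * (INR r + 1) <= INR (2 ^ k + r) + 1).
    { apply le_INR in Hr. rewrite mult_INR, !plus_INR in Hr. simpl INR in Hr.
      rewrite plus_INR. lra. }
    pose proof (pos_INR r).
    eapply Rle_trans; [|apply (lg_le (2 * (INR r + 1))); lra].
    rewrite lg_double by lra.
    rewrite count_below_app, !plus_INR, pow_INR. replace (INR 2) with 2 by (simpl; ring).
    set (c1 := INR (count_below x z (2 ^ k))) in *.
    set (c2 := INR (count_below x (z + 2 ^ k) r)) in *.
    replace (c1 + c2 - (2 ^ k + INR r) * x) with ((c1 - 2 ^ k * x) + (c2 - INR r * x)) by ring.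
    eapply Rle_trans; [apply Rabs_triang | lra].
Qed.

Definition lsum (f : nat -> R) (l : list nat) : R := fold_right Rplus 0 (map f l).

Fixpoint prefix_mass (f : nat -> R) (l : list nat) (u : nat) : R :=
  match l with
  | nil => 0
  | u0 :: l' => if Nat.eq_dec u0 u then 0 else f u0 + prefix_mass f l' u
  end.

Lemma lsum_nonneg (f : nat -> R) (l : list nat) :
  (forall u, In u l -> 0 <= f u) -> 0 <= lsum f l.
Proof.
  unfold lsum. induction l; simpl; intros H; [lra|].
  assert (0 <= f a) by auto. assert (0 <= fold_right Rplus 0 (map f l)) by auto. lra.
Qed.

Lemma prefix_mass_bounds (f : nat -> R) (l : list nat) (u : nat) :
  (forall u, In u l -> 0 <= f u) -> In u l ->
  0 <= prefix_mass f l u /\ prefix_mass f l u + f u <= lsum f l.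
Proof.
  induction l; simpl; intros H Hu; [tauto|]. unfold lsum; simpl; fold (lsum f l).
  assert (0 <= f a) by auto. assert (0 <= lsum f l) by (apply lsum_nonneg; auto).
  destruct (Nat.eq_dec a u); [subst; lra|]. destruct Hu as [-> | Hu]; [congruence|].
  destruct IHl; auto. lra.
Qed.

Lemma route_aux_spec (P : nat -> nat -> R) (v : nat) (l : list nat) :
  NoDup l -> (forall u, In u l -> 0 <= P v u) ->
  forall acc x, acc <= x -> x < acc + lsum (P v) l ->
  In (route_aux P v l acc x) l /\
  forall u, In u l -> (route_aux P v l acc x = u <->
    acc + prefix_mass (P v) l u <= x < acc + prefix_mass (P v) l u + P v u).
Proof.
  induction l as [|u0 l IH]; intros Hnd Hpos acc x Hax Hx; [unfold lsum in Hx; simpl in Hx; lra|].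
  inversion Hnd as [|? ? Hn0 Hnd']; subst.
  unfold lsum in Hx; simpl in Hx; fold (lsum (P v) l) in Hx.
  assert (0 <= P v u0) by (apply Hpos; simpl; auto).
  simpl. destruct (Rlt_dec x (acc + P v u0)).
  - split; [auto|]. intros u Hu. destruct (Nat.eq_dec u0 u); [subst; split; intros; auto; lra|].
    destruct Hu as [-> | Hu]; [congruence|].
    destruct (prefix_mass_bounds (P v) l u) as [Hp _]; auto; [intros; apply Hpos; simpl; auto|].
    split; intros; [congruence | lra].
  - destruct (IH Hnd' ltac:(intros; apply Hpos; simpl; auto) (acc + P v u0) x
                ltac:(lra) ltac:(lra)) as [Hin Hsp].
    split; [auto|]. intros u Hu. destruct (Nat.eq_dec u0 u); [subst; split; intros; [congruence | lra]|].
    destruct Hu as [-> | Hu]; [congruence|]. rewrite Hsp by auto. split; intros; lra.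
Qed.

Lemma lsum_support (N : nat) (f : nat -> R) (l : list nat) :
  NoDup l -> (forall u, In u l <-> (u < N)%nat /\ 0 < f u) ->
  (forall u, (u < N)%nat -> 0 <= f u) -> lsum f l = Rsum N f.
Proof.
  intros Hnd Hl Hpos.
  assert (Hfilter : forall l', (forall i, In i l' -> 0 <= f i) ->
            lsum f (filter (fun u => Rltb 0 (f u)) l') = lsum f l').
  { unfold lsum. induction l'; simpl; intros H; auto. unfold Rltb at 1.
    destruct (Rlt_dec 0 (f a)); simpl; rewrite IHl'; auto.
    assert (0 <= f a) by auto. assert (f a = 0) by lra. lra. }
  assert (Hperm : forall l1 l2, Permutation l1 l2 -> lsum f l1 = lsum f l2).
  { induction 1; unfold lsum in *; simpl; lra. }
  change (Rsum N f) with (lsum f (seq 0 N)).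
  rewrite <- (Hfilter (seq 0 N)) by (intros i Hi; apply in_seq in Hi; apply Hpos; lia).
  apply Hperm, NoDup_Permutation; [assumption | apply NoDup_filter, seq_NoDup|].
  intros u. rewrite Hl, filter_In, in_seq. unfold Rltb.
  destruct (Rlt_dec 0 (f u)); split; intros [H1 H2]; split; try lia; tauto || congruence.
Qed.

Lemma fibre_counts_sum (N : nat) (f : nat -> nat) (l : list nat) :
  (forall j, In j l -> (f j < N)%nat) ->
  Rsum N (fun u => INR (length (filter (fun j => Nat.eqb (f j) u) l))) = INR (length l).
Proof.
  induction l as [|j l IH]; intros Hl; [simpl; rewrite Rsum_const; ring|].
  rewrite (Rsum_ext _ _ (fun u => INR (length (filter (fun j0 => Nat.eqb (f j0) u) l)) +
                               (if Nat.eq_dec (f j) u then 1 else 0) * 1)).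
  - rewrite Rsum_plus, IH, (Rsum_delta_r N (fun _ => 1)) by (intros; apply Hl; simpl; auto).
    simpl length. rewrite S_INR; ring.
  - intros u _. simpl filter.
    destruct (Nat.eqb_spec (f j) u), (Nat.eq_dec (f j) u); try congruence;
      simpl length; rewrite ?S_INR; ring.
Qed.

Section Router.
Variables (N : nat) (P : nat -> nat -> R) (ord : nat -> list nat) (v : nat).
Hypothesis Hstoch : stochastic N P.
Hypothesis Hord : is_nbr_ordering N P ord.
Hypothesis Hv : (v < N)%nat.

Lemma nbr_ordering_row : NoDup (ord v) /\ (forall u, In u (ord v) -> 0 <= P v u) /\
  lsum (P v) (ord v) = 1.
Proof.
  destruct (Hord v Hv) as [Hnd Hin]. destruct Hstoch as [Hp Hs].
  split; [auto|]. split; [intros u Hu; apply Hin in Hu; lra|].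
  rewrite (lsum_support N); auto.
Qed.

Lemma sigma_spec (j : nat) : In (Defs.sigma P ord v j) (ord v) /\
  forall u, In u (ord v) -> (Defs.sigma P ord v j = u <->
    prefix_mass (P v) (ord v) u <= psi j < prefix_mass (P v) (ord v) u + P v u).
Proof.
  destruct nbr_ordering_row as [H1 [H2 H3]]. destruct (psi_bounds j).
  destruct (route_aux_spec P v (ord v) H1 H2 0 (psi j)) as [A B]; try lra.
  split; [auto|]. intros u Hu. unfold Defs.sigma. rewrite B; auto. rewrite !Rplus_0_l. tauto.
Qed.

Lemma Icount_count_difference (u z c : nat) : In u (ord v) ->
  (Icount P ord v u z (z + c) + count_below (prefix_mass (P v) (ord v) u) z c =
   count_below (prefix_mass (P v) (ord v) u + P v u) z c)%nat.
Proof.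
  intros Hu. unfold Icount, count_below. replace (z + c - z)%nat with c by lia.
  assert (Hw : 0 <= P v u) by (apply nbr_ordering_row; auto).
  set (a := prefix_mass (P v) (ord v) u).
  assert (Hsplit : forall l, (length (filter (fun j => Nat.eqb (Defs.sigma P ord v j) u) l) +
            length (filter (fun j => Rltb (psi j) a) l) =
            length (filter (fun j => Rltb (psi j) (a + P v u)) l))%nat).
  { induction l as [|j l IH]; [reflexivity|]. simpl.
    destruct (sigma_spec j) as [_ Hs]. specialize (Hs u Hu). fold a in Hs. unfold Rltb in *.
    destruct (Nat.eqb_spec (Defs.sigma P ord v j) u) as [E|E];
      destruct (Rlt_dec (psi j) a); destruct (Rlt_dec (psi j) (a + P v u)); simpl;
      try lia; exfalso; first [lra | apply Hs in E; lra | apply E, Hs; lra]. }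
  apply Hsplit.
Qed.

Lemma Icount_outside (u z c : nat) : ~ In u (ord v) -> Icount P ord v u z (z + c) = 0%nat.
Proof.
  intros Hu. unfold Icount.
  enough (Hnil : forall l, filter (fun j => Nat.eqb (Defs.sigma P ord v j) u) l = nil)
    by (rewrite Hnil; reflexivity).
  induction l as [|j l IH]; [reflexivity|]. simpl. rewrite IH.
  destruct (sigma_spec j) as [Hin _].
  destruct (Nat.eqb_spec (Defs.sigma P ord v j) u); [congruence | reflexivity].
Qed.

Lemma Icount_discrepancy (u z c : nat) : (u < N)%nat ->
  Rabs (INR (Icount P ord v u z (z + c)) - INR c * P v u) <= 2 * lg (INR c + 1).
Proof.
  intros HuN. assert (0 <= lg (INR c + 1)) by (apply lg_nonneg; pose proof (pos_INR c); lra).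
  destruct (in_dec Nat.eq_dec u (ord v)) as [Hu | Hu].
  - pose proof (Icount_count_difference u z c Hu) as E.
    destruct nbr_ordering_row as [H1 [H2 H3]].
    destruct (prefix_mass_bounds (P v) (ord v) u H2 Hu). assert (0 <= P v u) by auto.
    set (a := prefix_mass (P v) (ord v) u) in *.
    replace (INR (Icount P ord v u z (z + c)) - INR c * P v u) with
      ((INR (count_below (a + P v u) z c) - INR c * (a + P v u)) -
       (INR (count_below a z c) - INR c * a)) by (rewrite <- E, plus_INR; ring).
    eapply Rle_trans; [apply Rabs_triang|]. rewrite Rabs_Ropp.
    pose proof (count_below_discrepancy c z a ltac:(lra)).
    pose proof (count_below_discrepancy c z (a + P v u) ltac:(lra)). lra.
  - rewrite Icount_outside by auto.
    assert (Hzero : P v u = 0).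
    { destruct Hstoch as [Hp _]. destruct (Hp v u Hv HuN) as [Hlt | Heq]; [|auto].
      exfalso; apply Hu, (Hord v Hv); auto. }
    rewrite Hzero. simpl. rewrite Rmult_0_r, Rminus_0_r, Rabs_R0. lra.
Qed.

Lemma Icount_total (z c : nat) : Rsum N (fun u => INR (Icount P ord v u z (z + c))) = INR c.
Proof.
  unfold Icount. replace (z + c - z)%nat with c by lia.
  rewrite fibre_counts_sum, length_seq; auto.
  intros j _. destruct (sigma_spec j) as [Hin _]. apply (Hord v Hv) in Hin. tauto.
Qed.

End Router.

Section Powers.
Variables (N : nat) (P : nat -> nat -> R).
Hypothesis Hstoch : stochastic N P.

Lemma Ppow_nonneg (t u v : nat) : (u < N)%nat -> (v < N)%nat -> 0 <= Ppow N P t u v.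
Proof.
  revert v. induction t; intros v Hu Hv; simpl; [destruct (Nat.eq_dec u v); lra|].
  apply Rsum_nonneg; intros k Hk. apply Rmult_le_pos; auto. apply Hstoch; auto.
Qed.

Lemma Ppow_row_sum (t u : nat) : (u < N)%nat -> Rsum N (fun v => Ppow N P t u v) = 1.
Proof.
  intros Hu. induction t; simpl.
  - rewrite (Rsum_ext _ _ (fun i => (if Nat.eq_dec u i then 1 else 0) * 1)) by (intros; ring).
    apply (Rsum_delta_r N (fun _ => 1)); auto.
  - rewrite Rsum_swap, <- IHt. apply Rsum_ext; intros k Hk.
    rewrite Rsum_scal_l. destruct Hstoch as [_ Hs]. rewrite Hs; auto; ring.
Qed.

Lemma Ppow_add (s t u v : nat) : (u < N)%nat -> (v < N)%nat ->
  Ppow N P (s + t) u v = Rsum N (fun k => Ppow N P s u k * Ppow N P t k v).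
Proof.
  revert v. induction t; intros v Hu Hv; [rewrite Nat.add_0_r; simpl; rewrite Rsum_delta_l; auto|].
  rewrite Nat.add_succ_r. simpl.
  rewrite (Rsum_ext _ _ (fun j => Rsum N (fun k => Ppow N P s u k * Ppow N P t k j * P j v))).
  - rewrite Rsum_swap. apply Rsum_ext; intros k Hk. rewrite <- Rsum_scal_l. apply Rsum_ext; intros; ring.
  - intros j Hj. rewrite IHt by auto. rewrite <- Rsum_scal_r. reflexivity.
Qed.

Lemma Ppow_S_left (t u v : nat) : (u < N)%nat -> (v < N)%nat ->
  Ppow N P (S t) u v = Rsum N (fun k => P u k * Ppow N P t k v).
Proof.
  intros Hu Hv. change (S t) with (1 + t)%nat. rewrite Ppow_add by auto.
  apply Rsum_ext; intros k Hk. simpl. rewrite (Rsum_delta_r N (fun j => P j k)); auto.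
Qed.

Variable pi : nat -> R.
Hypothesis Hstat : stationary N P pi.

Lemma Ppow_stationary (t v : nat) : (v < N)%nat -> Rsum N (fun u => pi u * Ppow N P t u v) = pi v.
Proof.
  revert v. induction t; intros v Hv; simpl; [rewrite Rsum_delta_l; auto|].
  rewrite (Rsum_ext _ _ (fun u => Rsum N (fun k => pi u * Ppow N P t u k * P k v))).
  - rewrite Rsum_swap. destruct Hstat as [_ [_ Hs]]. rewrite <- Hs by auto.
    apply Rsum_ext; intros k Hk. rewrite <- IHt by auto. rewrite <- Rsum_scal_r. reflexivity.
  - intros u Hu. rewrite <- Rsum_scal_l. apply Rsum_ext; intros; ring.
Qed.

Lemma stationary_pos : irreducible N P -> forall v, (v < N)%nat -> 0 < pi v.
Proof.
  intros Hirr v Hv. destruct Hstat as [Hp [Hs _]].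
  destruct (Rsum_pos_witness N pi) as [u [Hu Hpu]]; [auto | lra|].
  destruct (Hirr u v Hu Hv) as [t Ht]. rewrite <- (Ppow_stationary t) by auto.
  eapply Rlt_le_trans with (pi u * Ppow N P t u v); [apply Rmult_lt_0_compat; auto|].
  apply (Rsum_term_le N (fun u0 => pi u0 * Ppow N P t u0 v)); auto.
  intros j Hj. apply Rmult_le_pos; auto. apply Ppow_nonneg; auto.
Qed.

Lemma Ppow_reversible : reversible N P pi ->
  forall t u v, (u < N)%nat -> (v < N)%nat -> pi u * Ppow N P t u v = pi v * Ppow N P t v u.
Proof.
  intros Hrev t. induction t; intros u v Hu Hv.
  - simpl. destruct (Nat.eq_dec u v), (Nat.eq_dec v u); subst; try ring; congruence.
  - rewrite (Ppow_S_left t v u) by auto. simpl. rewrite <- !Rsum_scal_l.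
    apply Rsum_ext; intros k Hk.
    replace (pi u * (Ppow N P t u k * P k v)) with ((pi u * Ppow N P t u k) * P k v) by ring.
    rewrite IHt by auto. replace (pi k * Ppow N P t k u * P k v) with (Ppow N P t k u * (pi k * P k v)) by ring.
    rewrite Hrev by auto. ring.
Qed.

End Powers.

Lemma l1_contraction (N : nat) (a : nat -> R) (Q : nat -> nat -> R) :
  (forall k u, (k < N)%nat -> (u < N)%nat -> 0 <= Q k u) ->
  (forall k, (k < N)%nat -> Rsum N (fun u => Q k u) = 1) ->
  Rsum N (fun u => Rabs (Rsum N (fun k => a k * Q k u))) <= Rsum N (fun k => Rabs (a k)).
Proof.
  intros H1 H2. eapply Rle_trans with (Rsum N (fun u => Rsum N (fun k => Rabs (a k) * Q k u))).
  - apply Rsum_le; intros u Hu; apply Rsum_abs_weighted; auto.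
  - rewrite Rsum_swap. apply Rsum_le; intros k Hk. rewrite Rsum_scal_l, H2; auto; lra.
Qed.

Lemma Rsum_abs_eq_0 (N : nat) (a : nat -> R) :
  Rsum N (fun k => Rabs (a k)) = 0 -> forall k, (k < N)%nat -> a k = 0.
Proof.
  intros H k Hk. destruct (Req_dec (a k) 0) as [|Hne]; auto.
  pose proof (Rabs_pos_lt _ Hne).
  pose proof (Rsum_term_le N (fun k => Rabs (a k)) k (fun j _ => Rabs_pos (a j)) Hk). lra.
Qed.

Definition pos_part (x : R) : R := Rmax x 0.
Definition neg_part (x : R) : R := Rmax (- x) 0.

Lemma pos_neg_parts (x : R) : x = pos_part x - neg_part x /\
  Rabs x = pos_part x + neg_part x /\ 0 <= pos_part x /\ 0 <= neg_part x.
Proof.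
  unfold pos_part, neg_part, Rmax.
  destruct (Rle_dec x 0), (Rle_dec (- x) 0); unfold Rabs; destruct (Rcase_abs x); lra.
Qed.

(* A mean-zero vector [a] moves mass [m = sum pos_part a] from its negative to
   its positive part, so [m (a Q) = sum_{k,k'} a+_k a-_k' (Q_k - Q_k')]. *)
Lemma mean_zero_coupling (N : nat) (a : nat -> R) (Q : nat -> nat -> R) (u : nat) :
  Rsum N a = 0 ->
  Rsum N (fun k => neg_part (a k)) = Rsum N (fun k => pos_part (a k)) /\
  Rsum N (fun k => pos_part (a k)) * Rsum N (fun k => a k * Q k u) =
  Rsum N (fun k => Rsum N (fun k' => pos_part (a k) * neg_part (a k') * (Q k u - Q k' u))).
Proof.
  intros Ha.
  assert (Hparts : Rsum N a = Rsum N (fun k => pos_part (a k)) - Rsum N (fun k => neg_part (a k))).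
  { rewrite <- Rsum_minus. apply Rsum_ext; intros; apply pos_neg_parts. }
  split; [lra|].
  rewrite (Rsum_ext N (fun k => Rsum N _)
             (fun k => pos_part (a k) * Q k u * Rsum N (fun k' => neg_part (a k')) -
                       pos_part (a k) * Rsum N (fun k' => neg_part (a k') * Q k' u))).
  - rewrite Rsum_minus, !Rsum_scal_r.
    rewrite (Rsum_ext N (fun k => a k * Q k u) (fun k => pos_part (a k) * Q k u - neg_part (a k) * Q k u))
      by (intros k _; rewrite (proj1 (pos_neg_parts (a k))) at 1; ring).
    rewrite Rsum_minus. replace (Rsum N (fun k => neg_part (a k))) with (Rsum N (fun k => pos_part (a k))) by lra.
    ring.
  - intros k _. rewrite <- !Rsum_scal_l, <- Rsum_minus. apply Rsum_ext; intros; ring.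
Qed.

Lemma l1_contraction_mean_zero (N : nat) (a : nat -> R) (Q : nat -> nat -> R) (B : R) :
  Rsum N a = 0 ->
  (forall k k', (k < N)%nat -> (k' < N)%nat -> Rsum N (fun u => Rabs (Q k u - Q k' u)) <= 2 * B) ->
  Rsum N (fun u => Rabs (Rsum N (fun k => a k * Q k u))) <= B * Rsum N (fun k => Rabs (a k)).
Proof.
  intros Ha HQ. set (m := Rsum N (fun k => pos_part (a k))).
  assert (Hneg : Rsum N (fun k => neg_part (a k)) = m) by apply (mean_zero_coupling N a Q 0 Ha).
  assert (Habs : Rsum N (fun k => Rabs (a k)) = 2 * m).
  { rewrite (Rsum_ext _ _ (fun k => pos_part (a k) + neg_part (a k))) by (intros; apply pos_neg_parts).
    rewrite Rsum_plus, Hneg. unfold m; ring. }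
  set (w := fun k k' => pos_part (a k) * neg_part (a k')).
  assert (Hw : forall k k', 0 <= w k k')
    by (intros; apply Rmult_le_pos; apply pos_neg_parts).
  rewrite Habs. destruct (Rle_lt_or_eq_dec 0 m) as [Hm | Hm];
    [apply Rsum_nonneg; intros; apply pos_neg_parts| |].
  - apply Rmult_le_reg_l with m; auto.
    assert (Hcouple : m * Rsum N (fun u => Rabs (Rsum N (fun k => a k * Q k u))) <=
      Rsum N (fun u => Rsum N (fun k => Rsum N (fun k' => w k k' * Rabs (Q k u - Q k' u))))).
    { rewrite <- Rsum_scal_l. apply Rsum_le; intros u Hu.
      rewrite <- (Rabs_pos_eq m) at 1 by lra. rewrite <- Rabs_mult.
      pose proof (proj2 (mean_zero_coupling N a Q u Ha)) as Hc. fold m in Hc. rewrite Hc.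
      eapply Rle_trans; [apply Rsum_abs|]. apply Rsum_le; intros k Hk.
      eapply Rle_trans; [apply Rsum_abs|]. apply Rsum_le; intros k' Hk'.
      rewrite Rabs_mult, (Rabs_pos_eq (_ * _)) by apply Hw. apply Rle_refl. }
    assert (Hrows : Rsum N (fun u => Rsum N (fun k => Rsum N (fun k' => w k k' * Rabs (Q k u - Q k' u))))
                    <= Rsum N (fun k => Rsum N (fun k' => w k k' * (2 * B)))).
    { rewrite Rsum_swap. apply Rsum_le; intros k Hk. rewrite Rsum_swap. apply Rsum_le; intros k' Hk'.
      rewrite Rsum_scal_l. apply Rmult_le_compat_l; auto. }
    assert (Hmass : Rsum N (fun k => Rsum N (fun k' => w k k' * (2 * B))) = m * (B * (2 * m))).
    { unfold w. rewrite (Rsum_ext _ _ (fun k => pos_part (a k) * (Rsum N (fun k' => neg_part (a k')) * (2 * B)))).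
      - rewrite Rsum_scal_r, Hneg. fold m. ring.
      - intros k _. rewrite <- Rsum_scal_r, <- Rsum_scal_l. apply Rsum_ext; intros; ring. }
    lra.
  - assert (Hzero : forall k, (k < N)%nat -> a k = 0) by (apply Rsum_abs_eq_0; lra).
    rewrite <- Hm, !Rmult_0_r, (Rsum_ext _ _ (fun _ => 0)); [rewrite Rsum_const; lra|].
    intros u _. rewrite (Rsum_ext _ _ (fun _ => 0)) by (intros k Hk; rewrite Hzero; auto; ring).
    rewrite Rsum_const, Rmult_0_r, Rabs_R0. reflexivity.
Qed.

Definition tail_profile (ts s : nat) : R := if lt_dec s ts then 0 else (/ 2) ^ (s / ts).

Lemma tail_profile_sum_blocks (ts q : nat) : (0 < ts)%nat ->
  Rsum (S q * ts) (tail_profile ts) <= INR ts * (1 - (/ 2) ^ q).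
Proof.
  intros Hts. induction q.
  - simpl. rewrite Nat.add_0_r, (Rsum_ext _ _ (fun _ => 0)); [rewrite Rsum_const; lra|].
    intros i Hi; unfold tail_profile; destruct (lt_dec i ts); [auto | lia].
  - replace (S (S q) * ts)%nat with (S q * ts + ts)%nat by lia. rewrite Rsum_split.
    rewrite (Rsum_ext ts _ (fun _ => (/ 2) ^ (S q))), Rsum_const; [simpl pow in *; lra|].
    intros i Hi. unfold tail_profile. destruct (lt_dec (S q * ts + i) ts); [nia|].
    f_equal. rewrite Nat.div_add_l, Nat.div_small by lia. lia.
Qed.

Lemma tail_profile_sum (ts T : nat) : (0 < ts)%nat -> Rsum T (tail_profile ts) <= INR ts.
Proof.
  intros Hts. assert (Hnn : forall s, 0 <= tail_profile ts s).
  { intros s. unfold tail_profile. destruct (lt_dec s ts); [lra | apply pow_le; lra]. }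
  apply Rle_trans with (Rsum (S T * ts) (tail_profile ts)).
  - replace (S T * ts)%nat with (T + (S T * ts - T))%nat by nia. rewrite Rsum_split.
    assert (0 <= Rsum (S T * ts - T) (fun i => tail_profile ts (T + i)%nat)) by (apply Rsum_nonneg; auto). lra.
  - eapply Rle_trans; [apply tail_profile_sum_blocks; auto|].
    assert (0 < (/ 2) ^ T) by (apply pow_lt; lra). pose proof (pos_INR ts). nra.
Qed.

(* Mixing.  [l1_to_pi w t] is the L1 distance from the row [P^t_{w,.}] to
   [pi] (twice the total variation distance), and [rows_close t B] says any
   two rows of [P^t] are within total variation distance [B]. *)
Section Mixing.
Variables (N : nat) (P : nat -> nat -> R) (pi : nat -> R) (tstar : nat).
Hypothesis Hstoch : stochastic N P.
Hypothesis Hstat : stationary N P pi.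
Hypothesis Hmix : is_mixing_rate N P pi tstar.

Definition l1_to_pi (w t : nat) : R := Rsum N (fun u => Rabs (Ppow N P t w u - pi u)).

Definition rows_close (t : nat) (B : R) : Prop :=
  forall k k', (k < N)%nat -> (k' < N)%nat ->
    Rsum N (fun u => Rabs (Ppow N P t k u - Ppow N P t k' u)) <= 2 * B.

Lemma rows_close_0 : rows_close 0 1.
Proof.
  intros k k' Hk Hk'. simpl.
  apply Rle_trans with (Rsum N (fun u => (if Nat.eq_dec k u then 1 else 0) * 1 +
                                         (if Nat.eq_dec k' u then 1 else 0) * 1)).
  - apply Rsum_le; intros u _.
    destruct (Nat.eq_dec k u), (Nat.eq_dec k' u); unfold Rabs; destruct Rcase_abs; lra.
  - rewrite Rsum_plus, !(Rsum_delta_r N (fun _ => 1)); auto; lra.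
Qed.

(* Submultiplicativity, by [l1_contraction_mean_zero] applied to the
   difference of two rows of [P^s]. *)
Lemma rows_close_add (s t : nat) (B1 B2 : R) :
  0 <= B2 -> rows_close s B1 -> rows_close t B2 -> rows_close (s + t) (B1 * B2).
Proof.
  intros HB G1 G2 k k' Hk Hk'.
  rewrite (Rsum_ext _ _ (fun u => Rabs (Rsum N (fun j => (Ppow N P s k j - Ppow N P s k' j) * Ppow N P t j u)))).
  - eapply Rle_trans; [apply l1_contraction_mean_zero with (B := B2); auto|].
    + rewrite Rsum_minus, !Ppow_row_sum; auto; ring.
    + specialize (G1 k k' Hk Hk'). nra.
  - intros u Hu. rewrite !Ppow_add by auto. rewrite <- Rsum_minus. f_equal. apply Rsum_ext; intros; ring.
Qed.

Lemma rows_close_mono (t t' : nat) (B : R) : (t <= t')%nat -> rows_close t B -> rows_close t' B.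
Proof.
  induction 1 as [|t' _ IH]; auto. intros G k k' Hk Hk'. simpl.
  rewrite (Rsum_ext _ _ (fun u => Rabs (Rsum N (fun j => (Ppow N P t' k j - Ppow N P t' k' j) * P j u)))).
  - eapply Rle_trans; [apply l1_contraction; intros; apply Hstoch; auto|]. apply IH; auto.
  - intros u Hu. rewrite <- Rsum_minus. f_equal. apply Rsum_ext; intros; ring.
Qed.

(* The distance to [pi] is nonincreasing in time, as [pi P = pi]. *)
Lemma l1_to_pi_mono (w t t' : nat) : (w < N)%nat -> (t <= t')%nat -> l1_to_pi w t' <= l1_to_pi w t.
Proof.
  intros Hw. induction 1 as [|t' _ IH]; [lra|]. eapply Rle_trans; [|apply IH]. unfold l1_to_pi. simpl.
  rewrite (Rsum_ext _ _ (fun u => Rabs (Rsum N (fun j => (Ppow N P t' w j - pi j) * P j u)))).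
  - apply l1_contraction; intros; apply Hstoch; auto.
  - intros u Hu. destruct Hstat as [_ [_ Hs]]. rewrite <- (Hs u Hu) at 1.
    rewrite <- Rsum_minus. f_equal. apply Rsum_ext; intros; ring.
Qed.

Lemma l1_to_pi_tstar (w : nat) : (w < N)%nat -> l1_to_pi w tstar <= / 2.
Proof.
  intros Hw. destruct Hmix as [H _]. destruct (H w Hw) as [tw [[Htw _] Hle]].
  unfold dTV_t in Htw. eapply Rle_trans; [apply (l1_to_pi_mono w tw); auto|]. unfold l1_to_pi. lra.
Qed.

(* Triangle inequality through [pi]. *)
Lemma rows_close_tstar : rows_close tstar (/ 2).
Proof.
  intros k k' Hk Hk'. pose proof (l1_to_pi_tstar k Hk). pose proof (l1_to_pi_tstar k' Hk').
  unfold l1_to_pi in *.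
  apply Rle_trans with (Rsum N (fun u => Rabs (Ppow N P tstar k u - pi u) + Rabs (Ppow N P tstar k' u - pi u)));
    [|rewrite Rsum_plus; lra].
  apply Rsum_le; intros u _.
  replace (Ppow N P tstar k u - Ppow N P tstar k' u)
    with ((Ppow N P tstar k u - pi u) - (Ppow N P tstar k' u - pi u)) by ring.
  eapply Rle_trans; [apply Rabs_triang|]. rewrite Rabs_Ropp. lra.
Qed.

Lemma rows_close_geometric (s : nat) : (0 < tstar)%nat -> rows_close s ((/ 2) ^ (s / tstar)).
Proof.
  intros H. apply rows_close_mono with (s / tstar * tstar)%nat.
  - rewrite Nat.mul_comm. apply Nat.Div0.mul_div_le; lia.
  - generalize (s / tstar)%nat as l. induction l; [apply rows_close_0|].
    apply rows_close_add; auto; [apply pow_le; lra | apply rows_close_tstar].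
Qed.

(* Since [pi] is an average of rows, closeness of rows bounds [l1_to_pi]. *)
Lemma l1_to_pi_le (t w : nat) (B : R) : (w < N)%nat -> rows_close t B -> l1_to_pi w t <= 2 * B.
Proof.
  intros Hw G. destruct Hstat as [Hp [Hs1 Hs]]. unfold l1_to_pi.
  apply Rle_trans with (Rsum N (fun u => Rsum N (fun v => pi v * Rabs (Ppow N P t w u - Ppow N P t v u)))).
  - apply Rsum_le; intros u Hu.
    replace (Ppow N P t w u - pi u) with (Rsum N (fun v => pi v * (Ppow N P t w u - Ppow N P t v u))).
    + eapply Rle_trans; [apply Rsum_abs|]. apply Rsum_le; intros v Hv. rewrite Rabs_mult, Rabs_pos_eq; auto; lra.
    + rewrite (Rsum_ext _ _ (fun v => pi v * Ppow N P t w u - pi v * Ppow N P t v u)) by (intros; ring).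
      rewrite Rsum_minus, Rsum_scal_r, Hs1, Ppow_stationary; auto; ring.
  - rewrite Rsum_swap. apply Rle_trans with (Rsum N (fun v => pi v * (2 * B))).
    + apply Rsum_le; intros v Hv. rewrite Rsum_scal_l. apply Rmult_le_compat_l; auto.
    + rewrite Rsum_scal_r, Hs1. lra.
Qed.

(* A mixing rate of 0 forces a single vertex: two distinct point masses are
   at total variation distance 1 > 1/2. *)
Lemma tstar_0_single_vertex : tstar = 0%nat -> (N <= 1)%nat.
Proof.
  intros H0. destruct (le_lt_dec N 1) as [|HN]; auto. exfalso.
  pose proof (rows_close_tstar 0%nat 1%nat ltac:(lia) HN) as G. rewrite H0 in G.
  rewrite (Rsum_ext _ _ (fun u => (if Nat.eq_dec 0 u then 1 else 0) * 1 +
                                 (if Nat.eq_dec 1 u then 1 else 0) * 1)) in G.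
  - rewrite Rsum_plus, !(Rsum_delta_r N (fun _ => 1)) in G; [|lia|lia].
    replace (2 * / 2) with 1 in G by field. lra.
  - intros u _. change (Ppow N P 0 0 u) with (if Nat.eq_dec 0 u then 1 else 0).
    change (Ppow N P 0 1 u) with (if Nat.eq_dec 1 u then 1 else 0).
    destruct (Nat.eq_dec 0 u), (Nat.eq_dec 1 u); subst; try lia; unfold Rabs; destruct Rcase_abs; lra.
Qed.

Definition mixing_weight (w s : nat) : R := if lt_dec s tstar then 1 else l1_to_pi w s.

(* [tstar] steps at weight 1, then a geometric tail of total at most [2 tstar]. *)
Lemma mixing_weight_sum (T w : nat) : (w < N)%nat -> Rsum T (mixing_weight w) <= 3 * INR tstar.
Proof.
  intros Hw. destruct (Nat.eq_dec tstar 0) as [H0 | Hts].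
  - (* a single vertex: every row of every power is [pi] *)
    assert (HN : N = 1%nat) by (pose proof (tstar_0_single_vertex H0); lia).
    assert (w = 0%nat) by lia. subst w.
    rewrite (Rsum_ext _ _ (fun _ => 0)); [rewrite Rsum_const, H0; simpl; lra|].
    intros s _. unfold mixing_weight, l1_to_pi. rewrite H0. destruct (lt_dec s 0); [lia|].
    pose proof (Ppow_row_sum N P Hstoch s 0 Hw) as Hrow. destruct Hstat as [_ [Hpi _]].
    rewrite HN in *. rewrite Rsum_S, Rsum_O, Rplus_0_l in *. rewrite Hrow, Hpi, Rminus_diag. apply Rabs_R0.
  - apply Rle_trans with (Rsum T (fun s => (if lt_dec s tstar then 1 else 0) + 2 * tail_profile tstar s)).
    + apply Rsum_le; intros s _. unfold mixing_weight, tail_profile. destruct (lt_dec s tstar); [lra|].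
      rewrite Rplus_0_l. apply l1_to_pi_le; auto. apply rows_close_geometric. lia.
    + rewrite Rsum_plus, Rsum_scal_l, Rsum_indicator_lt.
      pose proof (tail_profile_sum tstar T ltac:(lia)). pose proof (le_INR _ _ (Nat.le_min_r T tstar)). lra.
Qed.

End Mixing.

Lemma pi_min_le (N : nat) (pi : nat -> R) (u : nat) : (u < N)%nat -> pi_min N pi <= pi u.
Proof.
  intros Hu. unfold pi_min. assert (Hin : In u (seq 0 N)) by (apply in_seq; lia).
  induction (seq 0 N); simpl; [tauto|]. destruct Hin as [-> | Hin]; [apply Rmin_l|].
  eapply Rle_trans; [apply Rmin_r | auto].
Qed.

Lemma pi_min_pos (N : nat) (pi : nat -> R) :
  (0 < N)%nat -> (forall u, (u < N)%nat -> 0 < pi u) -> 0 < pi_min N pi.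
Proof.
  intros HN H. unfold pi_min. assert (Hl : forall u, In u (seq 0 N) -> 0 < pi u)
    by (intros u Hu; apply in_seq in Hu; apply H; lia).
  induction (seq 0 N); simpl; [apply H; auto|]. apply Rmin_glb_lt; simpl in Hl; auto.
Qed.

Section Propagation.
Variables (N : nat) (P : nat -> nat -> R) (pi : nat -> R).
Hypothesis Hstoch : stochastic N P.
Hypothesis Hirr : irreducible N P.
Hypothesis Hstat : stationary N P pi.
Hypothesis Hrev : reversible N P pi.

Lemma pi_pos (u : nat) : (u < N)%nat -> 0 < pi u.
Proof. apply (stationary_pos N P Hstoch pi Hstat Hirr). Qed.

Lemma Ppow_column_as_row (s u w : nat) : (u < N)%nat -> (w < N)%nat ->
  Ppow N P s u w = pi w / pi u * Ppow N P s w u.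
Proof.
  intros Hu Hw. pose proof (Ppow_reversible N P pi Hrev s u w Hu Hw). pose proof (pi_pos u Hu).
  apply Rmult_eq_reg_l with (pi u); [|lra]. rewrite H. field. lra.
Qed.

Lemma pi_ratio_le (u w : nat) : (u < N)%nat -> (w < N)%nat -> 0 < pi w / pi u <= pi w / pi_min N pi.
Proof.
  intros Hu Hw. pose proof (pi_pos u Hu). pose proof (pi_pos w Hw).
  assert (0 < pi_min N pi) by (apply pi_min_pos; [lia | apply pi_pos]).
  split; [apply Rdiv_lt_0_compat; auto|]. unfold Rdiv. apply Rmult_le_compat_l; [lra|].
  apply Rinv_le_contravar; auto. apply pi_min_le; auto.
Qed.

(* A mean-zero error vector bounded by [E] contributes at most
   [E (pi_w / pi_min) mixing_weight w s] at [w] after [s] steps; for [s >= tstar]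
   the mean-zero property lets us subtract [pi_w] from every entry of the column. *)
Lemma propagated_error_bound (tstar : nat) (e : nat -> R) (E : R) (s w : nat) : (w < N)%nat ->
  Rsum N e = 0 -> (forall u, (u < N)%nat -> Rabs (e u) <= E) ->
  Rabs (Rsum N (fun u => e u * Ppow N P s u w)) <= E * (pi w / pi_min N pi) * mixing_weight N P pi tstar w s.
Proof.
  intros Hw He HE. unfold mixing_weight. destruct (lt_dec s tstar).
  - eapply Rle_trans; [apply Rsum_abs_weighted; intros; apply (Ppow_nonneg N P Hstoch); auto|].
    apply Rle_trans with (Rsum N (fun u => E * (pi w / pi_min N pi * Ppow N P s w u))).
    + apply Rsum_le; intros u Hu. rewrite Ppow_column_as_row by auto.
      destruct (pi_ratio_le u w Hu Hw). pose proof (Ppow_nonneg N P Hstoch s w u Hw Hu).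
      apply Rmult_le_compat; auto using Rabs_pos; [apply Rmult_le_pos; lra|].
      apply Rmult_le_compat_r; auto.
    + rewrite !Rsum_scal_l, (Ppow_row_sum N P Hstoch) by auto. lra.
  - rewrite (Rsum_ext _ _ (fun u => e u * (Ppow N P s u w - pi w) + e u * pi w)) by (intros; ring).
    rewrite Rsum_plus, Rsum_scal_r, He, Rmult_0_l, Rplus_0_r.
    eapply Rle_trans; [apply Rsum_abs|]. unfold l1_to_pi. rewrite <- Rsum_scal_l.
    apply Rsum_le; intros u Hu. rewrite Rabs_mult.
    destruct (pi_ratio_le u w Hu Hw). pose proof (pi_pos u Hu).
    rewrite Ppow_column_as_row by auto.
    replace (pi w / pi u * Ppow N P s w u - pi w) with (pi w / pi u * (Ppow N P s w u - pi u)) by (field; lra).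
    rewrite Rabs_mult, (Rabs_pos_eq (pi w / pi u)) by lra. rewrite <- Rmult_assoc.
    apply Rmult_le_compat_r; [apply Rabs_pos|].
    apply Rmult_le_compat; auto using Rabs_pos; lra.
Qed.

End Propagation.

Lemma reversible_support (N : nat) (P : nat -> nat -> R) (pi : nat -> R) :
  reversible N P pi -> (forall u, (u < N)%nat -> 0 < pi u) ->
  forall u v, (u < N)%nat -> (v < N)%nat -> P u v = 0 -> P v u = 0.
Proof.
  intros Hrev Hpos u v Hu Hv H0. pose proof (Hrev u v Hu Hv) as E. rewrite H0, Rmult_0_r in E.
  pose proof (Hpos v Hv). destruct (Rmult_integral _ _ (eq_sym E)); lra.
Qed.

Lemma Rsum_over_support (N : nat) (P : nat -> nat -> R) (u : nat) (c : R) :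
  Rsum N (fun v => if Rlt_dec 0 (P u v) then c else 0) = INR (degree N P u) * c.
Proof.
  unfold Rsum, degree. induction (seq 0 N) as [|a l IH]; simpl; [ring|].
  destruct (Rlt_dec 0 (P u a)); simpl length; rewrite IH; try rewrite S_INR; ring.
Qed.

Lemma degree_le_max (N : nat) (P : nat -> nat -> R) (u : nat) :
  (u < N)%nat -> (degree N P u <= max_degree N P)%nat.
Proof.
  intros Hu. unfold max_degree. assert (Hin : In u (seq 0 N)) by (apply in_seq; lia).
  induction (seq 0 N); simpl; [tauto|]. destruct Hin as [-> | Hin]; [lia|]. specialize (IHl Hin); lia.
Qed.

Lemma push_forward_S (N : nat) (P : nat -> nat -> R) (f : nat -> R) (n w : nat) :
  Rsum N (fun u => f u * Ppow N P (S n) u w) =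
  Rsum N (fun k => Rsum N (fun u => f u * Ppow N P n u k) * P k w).
Proof.
  simpl. rewrite (Rsum_ext _ _ (fun u => Rsum N (fun k => f u * Ppow N P n u k * P k w))).
  - rewrite Rsum_swap. apply Rsum_ext; intros k _. rewrite <- Rsum_scal_r. reflexivity.
  - intros u _. rewrite <- Rsum_scal_l. apply Rsum_ext; intros; ring.
Qed.

Section RouterProcess.
Variables (N : nat) (P : nat -> nat -> R) (ord : nat -> list nat) (chi0 : nat -> nat).
Hypothesis Hstoch : stochastic N P.
Hypothesis Hord : is_nbr_ordering N P ord.

(* [sent_before t v] tokens have left [v] before round [t]; in round [t] the
   router at [v] sends tokens [sent_before t v, ..., + chi^(t)_v - 1]. *)
Definition sent_before (t v : nat) : nat := snd (qr_state N P ord chi0 t) v.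
Definition load (t u : nat) : R := INR (chi N P ord chi0 t u).
Definition sent (t v u : nat) : R :=
  INR (Icount P ord v u (sent_before t v) (sent_before t v + chi N P ord chi0 t v)).
Definition total_tokens : R := INR (nsum N chi0).

Definition round_error (t u : nat) : R := load (S t) u - Rsum N (fun v => load t v * P v u).

Lemma load_S (t u : nat) : load (S t) u = Rsum N (fun v => sent t v u).
Proof.
  unfold load, sent, sent_before, chi. simpl. destruct (qr_state N P ord chi0 t).
  apply INR_nsum.
Qed.

Lemma sent_total (t v : nat) : (v < N)%nat -> Rsum N (fun u => sent t v u) = load t v.
Proof. intros Hv. apply (Icount_total N P ord v Hstoch Hord Hv). Qed.

Lemma load_total (t : nat) : Rsum N (load t) = total_tokens.
Proof.
  induction t; [unfold total_tokens; rewrite INR_nsum; reflexivity|].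
  rewrite (Rsum_ext _ _ (fun u => Rsum N (fun v => sent t v u))) by (intros; apply load_S).
  rewrite Rsum_swap, <- IHt. apply Rsum_ext; intros; apply sent_total; auto.
Qed.

Lemma load_le_total (t v : nat) : (v < N)%nat -> 0 <= load t v <= total_tokens.
Proof.
  intros Hv. split; [apply pos_INR|]. rewrite <- (load_total t).
  apply (Rsum_term_le N (load t)); auto. intros; apply pos_INR.
Qed.

(* Since [P] is stochastic, rounding errors have mean zero. *)
Lemma round_error_sum (t : nat) : Rsum N (round_error t) = 0.
Proof.
  unfold round_error. rewrite Rsum_minus, load_total, Rsum_swap.
  rewrite (Rsum_ext _ _ (load t)); [rewrite load_total; ring|].
  intros v Hv. rewrite Rsum_scal_l. destruct Hstoch as [_ Hs]. rewrite Hs; auto; ring.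
Qed.

(* Each in-neighbour [v] of [u] contributes a van der Corput error of at most
   [2 lg(M+1)]; if [P] and its transpose have the same support there are
   [degree u <= Delta] of them. *)
Lemma round_error_bound (t u : nat) :
  (forall u v, (u < N)%nat -> (v < N)%nat -> P u v = 0 -> P v u = 0) -> (u < N)%nat ->
  Rabs (round_error t u) <= 2 * lg (total_tokens + 1) * INR (max_degree N P).
Proof.
  intros Hsupp Hu. set (L := lg (total_tokens + 1)).
  assert (HL : 0 <= L) by (apply lg_nonneg; pose proof (pos_INR (nsum N chi0)); unfold total_tokens; lra).
  unfold round_error. rewrite load_S, <- Rsum_minus.
  eapply Rle_trans; [apply Rsum_abs|].
  apply Rle_trans with (Rsum N (fun v => if Rlt_dec 0 (P u v) then 2 * L else 0)).
  - apply Rsum_le; intros v Hv. destruct (Rlt_dec 0 (P u v)).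
    + unfold sent, load. eapply Rle_trans; [apply (Icount_discrepancy N P ord v Hstoch Hord Hv); auto|].
      pose proof (load_le_total t v Hv). unfold load in *.
      apply Rmult_le_compat_l; [lra|]. apply lg_le; lra.
    + assert (Hvu : P v u = 0) by (apply Hsupp; auto; destruct Hstoch as [Hp _]; specialize (Hp u v Hu Hv); lra).
      unfold sent. rewrite (Icount_outside N P ord v Hstoch Hord Hv); [|intros Hin; apply (Hord v Hv) in Hin; lra].
      rewrite Hvu, Rmult_0_r, Rminus_0_r. simpl INR. rewrite Rabs_R0. lra.
  - rewrite Rsum_over_support. pose proof (le_INR _ _ (degree_le_max N P u Hu)).
    pose proof (pos_INR (degree N P u)). nra.
Qed.

Lemma error_decomposition (T w : nat) : (w < N)%nat ->
  load T w - mu N P chi0 T w =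
  Rsum T (fun t => Rsum N (fun u => round_error t u * Ppow N P (T - S t) u w)).
Proof.
  revert w. induction T; intros w Hw.
  - unfold load, mu, chi. simpl. rewrite (Rsum_delta_l N (fun v => INR (chi0 v))), Rsum_O by auto. ring.
  - rewrite Rsum_S. replace (S T - S T)%nat with 0%nat by lia.
    simpl Ppow at 2. rewrite (Rsum_delta_l N (round_error T)) by auto.
    rewrite (Rsum_ext T _ (fun t => Rsum N (fun k => Rsum N (fun u => round_error t u * Ppow N P (T - S t) u k) * P k w))).
    2:{ intros t Ht. replace (S T - S t)%nat with (S (T - S t)) by lia. apply push_forward_S. }
    rewrite Rsum_swap.
    rewrite (Rsum_ext N _ (fun k => (load T k - mu N P chi0 T k) * P k w))
      by (intros k Hk; rewrite IHT, Rsum_scal_r; auto).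
    rewrite (Rsum_ext N (fun k => (load T k - mu N P chi0 T k) * P k w)
               (fun k => load T k * P k w - mu N P chi0 T k * P k w)) by (intros; ring).
    assert (Hmu : mu N P chi0 (S T) w = Rsum N (fun k => mu N P chi0 T k * P k w))
      by (unfold mu; apply push_forward_S).
    rewrite Hmu. unfold round_error. rewrite Rsum_minus. ring.
Qed.

End RouterProcess.

Theorem theorem5p7 (N : nat) (P : nat -> nat -> R) (pi : nat -> R) (tstar : nat)
  (ord : nat -> list nat) (chi0 : nat -> nat) :
  ergodic N P ->
  stationary N P pi ->
  reversible N P pi ->
  is_mixing_rate N P pi tstar ->
  is_nbr_ordering N P ord ->
  forall (T w : nat), (w < N)%nat ->
    Rabs (INR (chi N P ord chi0 T w) - mu N P chi0 T w) <=
      6 * pi w / pi_min N pi * lg (INR (nsum N chi0) + 1) * INR tstar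
        * INR (max_degree N P).
Proof.
  intros [Hstoch [Hirr _]] Hstat Hrev Hmix Hord T w Hw.
  set (E := 2 * lg (INR (nsum N chi0) + 1) * INR (max_degree N P)).
  set (K := pi w / pi_min N pi).
  assert (HEK : 0 <= E * K).
  { assert (0 < K) by (pose proof (pi_ratio_le N P pi Hstoch Hirr Hstat w w Hw Hw); unfold K; lra).
    apply Rmult_le_pos; [|lra]. apply Rmult_le_pos; [|apply pos_INR].
    pose proof (lg_nonneg (INR (nsum N chi0) + 1)). pose proof (pos_INR (nsum N chi0)). lra. }
  assert (Hsupp := reversible_support N P pi Hrev (pi_pos N P pi Hstoch Hirr Hstat)).
  assert (Hterm : forall t, Rabs (Rsum N (fun u => round_error N P ord chi0 t u * Ppow N P (T - S t) u w))
                            <= E * K * mixing_weight N P pi tstar w (T - S t)).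
  { intros t. apply (propagated_error_bound N P pi Hstoch Hirr Hstat Hrev); auto.
    - apply round_error_sum; auto.
    - intros u Hu. apply round_error_bound; auto. }
  change (INR (chi N P ord chi0 T w)) with (load N P ord chi0 T w).
  rewrite (error_decomposition N P ord chi0 T w Hw).
  eapply Rle_trans; [apply Rsum_abs|].
  eapply Rle_trans; [apply Rsum_le; intros t _; apply Hterm|].
  rewrite Rsum_scal_l, (Rsum_rev T (mixing_weight N P pi tstar w)).
  eapply Rle_trans; [apply Rmult_le_compat_l; [auto | apply (mixing_weight_sum N P pi tstar); auto]|].
  unfold E, K. right. unfold Rdiv. ring.
Qed.
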